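(* Consider any execution of the reliable broadcast algorithm described in the context, with $n$ processes of which at most $f$ are Byzantine. At every point of the execution the following hold, where $\langle x\rangle_p$ denotes $x$ signed by $p$: (I1) If $\langle\langle ts,v\rangle_i,\sigma\rangle$, with $\sigma$ a set of $f+1$ signatures (of distinct processes) on $\langle ready,\langle ts,v\rangle_i\rangle$, appears in $deliver_j$ for some processes $i,j$, then $\langle ready,\langle ts,v\rangle_i\rangle_k\in ready_k$ for some correct process $k$. (I2) If $\langle ready,\langle ts,v\rangle_i\rangle_j\in ready_j$ for a correct process $j$, then $\langle ts,v\rangle_i\in echo_j$. (I3) If $\langle ready,\langle ts,v\rangle_i\rangle_j\in ready_j$ and $\langle ready,\langle ts,w\rangle_i\rangle_{j'}\in ready_{j'}$ for correct processes $j,j'$, then $v=w$. (I4) If $\langle\langle ts,v\rangle_i,\sigma\rangle\in deliver_j$ and $\langle\langle ts,w\rangle_i,\sigma'\rangle\in deliver_{j'}$ (with $\sigma,\sigma'$ sets of $f+1$ ready signatures as in (I1)) for correct processes $j,j'$, then $v=w$.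
   Context: Model: processes $\Pi=\{1,\dots,n\}$, asynchronous, communicating through reliable single-writer multi-reader (SWMR) registers. Up to $f$ processes are Byzantine (arbitrary behavior, may write arbitrary values to their own registers); correct processes follow the algorithm. PKI: $\langle x\rangle_p$ denotes $x$ signed by $p$, and signatures are unforgeable. Algorithm (code for process $i$): $i$ owns SWMR registers $send_i$, $echo_i$, $ready_i$, $deliver_i$ (the last three hold sets, initially empty; a correct process only adds elements to them). conflicting-echo$(\langle ts,v\rangle_j)$: reads all echo registers and returns true iff there exist $w\neq v$ and $k\in\Pi$ with $\langle ts,w\rangle_j\in echo_k$. broadcast$(ts,val)$: write $send_i\gets\langle ts,val\rangle_i$; then repeatedly call deliver$(i,ts)$ until it returns a value $\neq\bot$, and return. deliver$(j,ts)$: call refresh(); if there exist $k\in\Pi$ and $v$ such that $\langle\langle ts,v\rangle_j,\sigma\rangle\in deliver_k$ where $\sigma$ is a set of $f+1$ signatures of distinct processes on $\langle ready,\langle ts,v\rangle_j\rangle$, then add $\langle\langle ts,v\rangle_j,\sigma\rangle$ to $deliver_i$ and return $v$; otherwise return $\bot$. refresh(): for each $j\in[n]$: read $m\gets send_j$; if $m$ is not of the form $\langle ts,val\rangle_j$, skip to the next $j$; add $m$ (signed by $i$) to $echo_i$; if not conflicting-echo$(m)$, add $\langle ready,m\rangle_i$ to $ready_i$; if there is a set $S\subseteq\Pi$ with $|S|\geq f+1$ such that $\langle ready,m\rangle_l\in ready_l$ for all $l\in S$, and not conflicting-echo$(m)$ (re-reading all echo registers), then add $\langle m,\{\langle ready,m\rangle_l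 : l\in S\}\rangle$ to $deliver_i$. *)

From Stdlib Require Import List Arith.
Import ListNotations.
Set Implicit Arguments.

Section RB.

(* Type of broadcast values; timestamps are natural numbers.
   Processes are the natural numbers 0 .. n-1. *)
Variable V : Type.

(* Symbolic message terms.  MSig p x is <x>_p (x signed by p);
   MVal ts v is the pair <ts,v>; MReady x is <ready,x>;
   MDel x sigma is the deliver entry <x, sigma>; MJunk is any other value. *)
Inductive msg : Type :=
| MVal (ts : nat) (v : V)
| MSig (p : nat) (x : msg)
| MReady (x : msg)
| MDel (x : msg) (sigma : list msg)
| MJunk.

Definition sval (i ts : nat) (v : V) : msg := MSig i (MVal ts v).
Definition rdy (l : nat) (x : msg) : msg := MSig l (MReady x).

Inductive subterm : msg -> msg -> Prop :=
| st_refl x : subterm x x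
| st_sig y p x : subterm y x -> subterm y (MSig p x)
| st_ready y x : subterm y x -> subterm y (MReady x)
| st_del1 y x s : subterm y x -> subterm y (MDel x s)
| st_del2 y x s z : In z s -> subterm y z -> subterm y (MDel x s).

Record mem : Type := Mem {
  m_send : nat -> option msg;
  m_echo : nat -> list msg;
  m_ready : nat -> list msg;
  m_deliver : nat -> list msg }.

(* Code of a correct process, in continuation-passing style: every
   constructor is one atomic step (a single register read or write, or an
   internal nondeterministic choice / test). *)
Inductive prog : Type :=
| PDone (r : option V)
| PReadSend (j : nat) (k : option msg -> prog)
| PReadEcho (j : nat) (k : list msg -> prog)
| PReadReady (j : nat) (k : list msg -> prog)
| PReadDeliver (j : nat) (k : list msg -> prog)
| PWriteSend (x : msg) (k : prog)
| PAddEcho (x : msg) (k : prog)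
| PAddReady (x : msg) (k : prog)
| PAddDeliver (x : msg) (k : prog)
| PChoose (A : Type) (P : A -> Prop) (k : A -> prog).

Definition PIf (P : Prop) (p1 p2 : prog) : prog :=
  PChoose (fun b : bool => if b then P else ~ P) (fun b => if b then p1 else p2).

Definition upd {A : Type} (g : nat -> A) (i : nat) (a : A) : nat -> A :=
  fun j => if Nat.eqb j i then a else g j.

Fixpoint read_all (rd : nat -> (list msg -> prog) -> prog) (js : list nat)
  (k : (nat -> list msg) -> prog) : prog :=
  match js with
  | [] => k (fun _ => [])
  | j :: js' => rd j (fun e => read_all rd js' (fun s => k (upd s j e)))
  end.

Variables n f : nat.

Definition all_procs : list nat := seq 0 n.

Definition cert (x : msg) (sigma : list msg) : Prop :=
  length sigma = f + 1 /\
  exists ls : list nat, NoDup ls /\ (forall l, In l ls -> l < n) /\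
    sigma = map (fun l => rdy l x) ls.

(* conflicting-echo(x) evaluated on the collected echo registers snap
   (an element of echo_k is signed by its owner k). *)
Definition conflicting (x : msg) (snap : nat -> list msg) : Prop :=
  exists j ts v w k, x = sval j ts v /\ w <> v /\ k < n /\
    In (MSig k (sval j ts w)) (snap k).

Definition ready_quorum (x : msg) (rs : nat -> list msg) (Q : list nat) : Prop :=
  NoDup Q /\ f + 1 <= length Q /\
  (forall l, In l Q -> l < n /\ In (rdy l x) (rs l)).

(* Body of refresh() for one well-formed message x read from send_j. *)
Definition process_m (i : nat) (x : msg) (k : prog) : prog :=
  PAddEcho (MSig i x)
  (read_all PReadEcho all_procs (fun s1 =>
    let rest :=
      read_all PReadReady all_procs (fun rs =>
      read_all PReadEcho all_procs (fun s2 =>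
      PChoose (fun oS : option (list nat) =>
                 match oS with
                 | Some Q => ready_quorum x rs Q /\ ~ conflicting x s2
                 | None => ~ ((exists Q, ready_quorum x rs Q) /\ ~ conflicting x s2)
                 end)
        (fun oS => match oS with
                   | Some Q => PAddDeliver (MDel x (map (fun l => rdy l x) Q)) k
                   | None => k
                   end))) in
    PIf (conflicting x s1) rest (PAddReady (rdy i x) rest))).

Fixpoint refresh_loop (i : nat) (js : list nat) (k : prog) : prog :=
  match js with
  | [] => k
  | j :: js' =>
      PReadSend j (fun om =>
        PChoose (fun o : option (nat * V) =>
                   match o with
                   | Some (ts, v) => om = Some (sval j ts v)
                   | None => forall ts v, om <> Some (sval j ts v)
                   end)
          (fun o => match o with
                    | Some (ts, v) => process_m i (sval j ts v) (refresh_loop i js' k)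
                    | None => refresh_loop i js' k
                    end))
  end.

Definition refresh (i : nat) (k : prog) : prog := refresh_loop i all_procs k.

Definition deliver_op (i j ts : nat) : prog :=
  refresh i (read_all PReadDeliver all_procs (fun ds =>
    PChoose (fun o : option (msg * V) =>
               match o with
               | Some (e, v) => exists k sigma, k < n /\ e = MDel (sval j ts v) sigma /\
                                  In e (ds k) /\ cert (sval j ts v) sigma
               | None => ~ exists k v sigma, k < n /\ In (MDel (sval j ts v) sigma) (ds k)
                                  /\ cert (sval j ts v) sigma
               end)
      (fun o => match o with
                | Some (e, v) => PAddDeliver e (PDone (Some v))
                | None => PDone None
                end))).

(* broadcast(ts, val) by process i: the write of send_i, then the calls
   deliver(i, ts) (repeated by the scheduler rules below). *)
Definition broadcast_op (i ts : nat) (val : V) : prog :=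
  PWriteSend (sval i ts val) (deliver_op i i ts).

(* Global configuration: memory, the program counter of each process,
   whether the process is inside broadcast(ts,_) (Some ts), and the ghost
   list of all values ever written (what the adversary may have seen). *)
Record config : Type := Cfg {
  c_mem : mem;
  c_pc : nat -> prog;
  c_bc : nat -> option nat;
  c_seen : list msg }.

Variable B : list nat.

Definition correct (p : nat) : Prop := p < n /\ ~ In p B.

Definition unforgeable (seen : list msg) (x : msg) : Prop :=
  forall q y, subterm (MSig q y) x ->
    In q B \/ exists z, In z seen /\ subterm (MSig q y) z.

Definition set_send (M : mem) i o := Mem (upd (m_send M) i o) (m_echo M) (m_ready M) (m_deliver M).
Definition set_echo (M : mem) i s := Mem (m_send M) (upd (m_echo M) i s) (m_ready M) (m_deliver M).
Definition set_ready (M : mem) i s := Mem (m_send M) (m_echo M) (upd (m_ready M) i s) (m_deliver M).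
Definition set_deliver (M : mem) i s := Mem (m_send M) (m_echo M) (m_ready M) (upd (m_deliver M) i s).

Definition opt_list (o : option msg) : list msg :=
  match o with Some x => [x] | None => [] end.

Inductive step : config -> config -> Prop :=
| s_read_send C i j k : correct i -> c_pc C i = PReadSend j k ->
    step C (Cfg (c_mem C) (upd (c_pc C) i (k (m_send (c_mem C) j))) (c_bc C) (c_seen C))
| s_read_echo C i j k : correct i -> c_pc C i = PReadEcho j k ->
    step C (Cfg (c_mem C) (upd (c_pc C) i (k (m_echo (c_mem C) j))) (c_bc C) (c_seen C))
| s_read_ready C i j k : correct i -> c_pc C i = PReadReady j k ->
    step C (Cfg (c_mem C) (upd (c_pc C) i (k (m_ready (c_mem C) j))) (c_bc C) (c_seen C))
| s_read_deliver C i j k : correct i -> c_pc C i = PReadDeliver j k ->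
    step C (Cfg (c_mem C) (upd (c_pc C) i (k (m_deliver (c_mem C) j))) (c_bc C) (c_seen C))
| s_write_send C i x k : correct i -> c_pc C i = PWriteSend x k ->
    step C (Cfg (set_send (c_mem C) i (Some x)) (upd (c_pc C) i k) (c_bc C) (x :: c_seen C))
| s_add_echo C i x k : correct i -> c_pc C i = PAddEcho x k ->
    step C (Cfg (set_echo (c_mem C) i (x :: m_echo (c_mem C) i)) (upd (c_pc C) i k)
              (c_bc C) (x :: c_seen C))
| s_add_ready C i x k : correct i -> c_pc C i = PAddReady x k ->
    step C (Cfg (set_ready (c_mem C) i (x :: m_ready (c_mem C) i)) (upd (c_pc C) i k)
              (c_bc C) (x :: c_seen C))
| s_add_deliver C i x k : correct i -> c_pc C i = PAddDeliver x k ->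
    step C (Cfg (set_deliver (c_mem C) i (x :: m_deliver (c_mem C) i)) (upd (c_pc C) i k)
              (c_bc C) (x :: c_seen C))
| s_choose C i (A : Type) (P : A -> Prop) k (a : A) : correct i -> c_pc C i = PChoose P k ->
    P a -> step C (Cfg (c_mem C) (upd (c_pc C) i (k a)) (c_bc C) (c_seen C))
| s_invoke_broadcast C i r ts val : correct i -> c_pc C i = PDone r -> c_bc C i = None ->
    step C (Cfg (c_mem C) (upd (c_pc C) i (broadcast_op i ts val))
              (upd (c_bc C) i (Some ts)) (c_seen C))
| s_invoke_deliver C i r j ts : correct i -> c_pc C i = PDone r -> c_bc C i = None -> j < n ->
    step C (Cfg (c_mem C) (upd (c_pc C) i (deliver_op i j ts)) (c_bc C) (c_seen C))
| s_bcast_retry C i ts : correct i -> c_pc C i = PDone None -> c_bc C i = Some ts ->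
    step C (Cfg (c_mem C) (upd (c_pc C) i (deliver_op i i ts)) (c_bc C) (c_seen C))
| s_bcast_return C i ts v : correct i -> c_pc C i = PDone (Some v) -> c_bc C i = Some ts ->
    step C (Cfg (c_mem C) (c_pc C) (upd (c_bc C) i None) (c_seen C))
| s_byz_send C p o : In p B -> (forall x, o = Some x -> unforgeable (c_seen C) x) ->
    step C (Cfg (set_send (c_mem C) p o) (c_pc C) (c_bc C) (opt_list o ++ c_seen C))
| s_byz_echo C p s : In p B -> (forall x, In x s -> unforgeable (c_seen C) x) ->
    step C (Cfg (set_echo (c_mem C) p s) (c_pc C) (c_bc C) (s ++ c_seen C))
| s_byz_ready C p s : In p B -> (forall x, In x s -> unforgeable (c_seen C) x) ->
    step C (Cfg (set_ready (c_mem C) p s) (c_pc C) (c_bc C) (s ++ c_seen C))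
| s_byz_deliver C p s : In p B -> (forall x, In x s -> unforgeable (c_seen C) x) ->
    step C (Cfg (set_deliver (c_mem C) p s) (c_pc C) (c_bc C) (s ++ c_seen C)).

Definition init_config : config :=
  Cfg (Mem (fun _ => None) (fun _ => []) (fun _ => []) (fun _ => []))
      (fun _ => PDone None) (fun _ => None) [].

Inductive reachable : config -> Prop :=
| r_init : reachable init_config
| r_step C C' : reachable C -> step C C' -> reachable C'.

End RB.

(* A correct process readies <ts,v>_i only after writing its echo of <ts,v>_i and then
   reading every echo register without finding an echo of some <ts,w>_i with w <> v.  If
   correct p and q readied <ts,v>_i and <ts,w>_i, then of the two reads "p reads echo_q" and
   "q reads echo_p" the later one happens after both echoes were written and would have seen
   the conflict, so v = w (I3).  To make this an invariant, the program counter of every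
   correct process is abstracted by a phase, and p is "committed" to x with respect to k once
   it has read echo_k cleanly on its way to readying x; two correct processes are never
   committed to conflicting values with respect to each other.  A certificate carries f+1
   ready signatures of distinct processes, hence one by a correct process, and by
   unforgeability every ready signature of a correct process found in shared memory was
   written by that process (I1).  I4 follows from I1 and I3. *)

From Stdlib Require Import List Arith Lia Classical Eqdep.
Import ListNotations.

Lemma upd_eq {A : Type} (g : nat -> A) i a : upd g i a i = a.
Proof. unfold upd. rewrite Nat.eqb_refl. reflexivity. Qed.

Lemma upd_neq {A : Type} (g : nat -> A) i a j : j <> i -> upd g i a j = g j.
Proof. intros Hne. unfold upd. apply Nat.eqb_neq in Hne. rewrite Hne. reflexivity. Qed.

Lemma incl_upd_cons {A : Type} (g : nat -> list A) i x l : incl (g l) (upd g i (x :: g i) l).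
Proof.
  unfold upd. destruct (Nat.eqb_spec l i) as [-> | _]; [apply incl_tl|]; apply incl_refl.
Qed.

Lemma nodup_longer_not_incl {A : Type} (l1 l2 : list A) :
  NoDup l1 -> length l2 < length l1 -> exists x, In x l1 /\ ~ In x l2.
Proof.
  intros Hnd Hlen. apply NNPP. intros Hno.
  assert (Hincl : incl l1 l2).
  { intros x Hx. apply NNPP. intros Hx2. apply Hno. exists x. auto. }
  pose proof (NoDup_incl_length Hnd Hincl). lia.
Qed.

Section Invariant.

Variable V : Type.
Variables n f : nat.
Variable B : list nat.

Notation msg := (msg V).
Notation prog := (prog V).
Notation config := (config V).
Notation correct := (correct n B).
Notation all_procs := (all_procs n).
Notation snapshot := (nat -> list msg).

Lemma correct_lt {p} : correct p -> p < n.
Proof. intros [Hp _]. exact Hp. Qed.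

Lemma correct_not_byz {p q} : correct p -> In q B -> p <> q.
Proof. intros [_ Hp] Hq ->. contradiction. Qed.

Lemma in_all_procs l : l < n -> In l all_procs.
Proof. intros Hl. apply in_seq. lia. Qed.

Lemma PChoose_inj {A A' : Type} {P : A -> Prop} {P' : A' -> Prop}
  {k : A -> prog} {k' : A' -> prog} {a : A} :
  PChoose P k = PChoose P' k' -> P a -> exists a', P' a' /\ k' a' = k a.
Proof.
  intros E Ha. inversion E; subst.
  repeat match goal with H : existT _ _ _ = existT _ _ _ |- _ => apply inj_pair2 in H end.
  subst. eauto.
Qed.

Lemma rdy_not_subterm_sval {k y i ts} {v : V} : ~ subterm (rdy k y) (sval i ts v).
Proof.
  intros H. inversion H; subst.
  match goal with H0 : subterm _ (MVal _ _) |- _ => inversion H0 end.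
Qed.

Lemma rdy_not_subterm_echo {k y p i ts} {v : V} : ~ subterm (rdy k y) (MSig p (sval i ts v)).
Proof. intros H. inversion H; subst. eapply rdy_not_subterm_sval; eauto. Qed.

Lemma rdy_subterm_rdy k y l i ts (v : V) :
  subterm (rdy k y) (rdy l (sval i ts v)) -> k = l /\ y = sval i ts v.
Proof.
  intros H. inversion H; subst; auto.
  match goal with H0 : subterm _ (MReady _) |- _ => inversion H0; subst end.
  exfalso. eapply rdy_not_subterm_sval; eauto.
Qed.

Lemma rdy_subterm_cert_entry k y i ts (v : V) Q :
  subterm (rdy k y) (MDel (sval i ts v) (map (fun l => rdy l (sval i ts v)) Q)) ->
  In k Q /\ y = sval i ts v.
Proof.
  intros H. inversion H; subst.
  - exfalso. eapply rdy_not_subterm_sval; eauto.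
  - match goal with H0 : In _ (map _ _) |- _ => apply in_map_iff in H0 as (l & <- & Hl) end.
    match goal with H0 : subterm _ (rdy _ _) |- _ => apply rdy_subterm_rdy in H0 as [-> ->] end.
    auto.
Qed.

(** * Programs and phases *)

(* The continuations occurring inside [deliver_op], [refresh_loop] and [process_m], named so
   that phases can refer to them; each is convertible to the corresponding subterm. *)
Definition deliver_check (dj dts : nat) (ds : snapshot) : prog :=
  PChoose (fun o : option (msg * V) =>
             match o with
             | Some (e, v) => exists k sigma, k < n /\ e = MDel (sval dj dts v) sigma /\
                                In e (ds k) /\ cert n f (sval dj dts v) sigma
             | None => ~ exists k v sigma, k < n /\ In (MDel (sval dj dts v) sigma) (ds k)
                                /\ cert n f (sval dj dts v) sigma
             end)
    (fun o => match o with
              | Some (e, v) => PAddDeliver e (PDone (Some v))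
              | None => PDone None
              end).

Definition deliver_scan (dj dts : nat) : prog :=
  read_all (@PReadDeliver V) all_procs (deliver_check dj dts).

Definition refresh_rest (p : nat) (js : list nat) (dj dts : nat) : prog :=
  refresh_loop n f p js (deliver_scan dj dts).

Definition quorum_check (x : msg) (K : prog) (rs s2 : snapshot) : prog :=
  PChoose (fun oS : option (list nat) =>
             match oS with
             | Some Q => ready_quorum n f x rs Q /\ ~ conflicting n x s2
             | None => ~ ((exists Q, ready_quorum n f x rs Q) /\ ~ conflicting n x s2)
             end)
    (fun oS => match oS with
               | Some Q => PAddDeliver (MDel x (map (fun l => rdy l x) Q)) K
               | None => K
               end).

Definition rescan_echo (x : msg) (K : prog) (rs : snapshot) : prog :=
  read_all (@PReadEcho V) all_procs (quorum_check x K rs).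

Definition scan_ready (x : msg) (K : prog) : prog :=
  read_all (@PReadReady V) all_procs (rescan_echo x K).

Definition echo_check (p : nat) (x : msg) (K : prog) (s1 : snapshot) : prog :=
  PIf (conflicting n x s1) (scan_ready x K) (PAddReady (rdy p x) (scan_ready x K)).

Definition parse_send (p j : nat) (js : list nat) (K : prog) (om : option msg) : prog :=
  PChoose (fun o : option (nat * V) =>
             match o with
             | Some (ts, v) => om = Some (sval j ts v)
             | None => forall ts v, om <> Some (sval j ts v)
             end)
    (fun o => match o with
              | Some (ts, v) => process_m n f p (sval j ts v) (refresh_loop n f p js K)
              | None => refresh_loop n f p js K
              end).

(* The program counter of a correct process, up to its continuation closures: in a scan,
   [rem] lists the registers still to be read and [acc] completes the snapshot from their
   values, so [acc (fun _ => [])] holds the values read so far. *)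
Inductive phase : Type :=
| PhIdle (r : option V)
| PhBroadcast (ts : nat) (v : V)
| PhReadSend (j : nat) (js : list nat) (dj dts : nat)
| PhParseSend (j : nat) (js : list nat) (om : option msg) (dj dts : nat)
| PhAddEcho (i ts : nat) (v : V) (js : list nat) (dj dts : nat)
| PhScanEcho (i ts : nat) (v : V) (rem : list nat) (acc : snapshot -> snapshot)
    (js : list nat) (dj dts : nat)
| PhAddReady (i ts : nat) (v : V) (js : list nat) (dj dts : nat)
| PhScanReady (i ts : nat) (v : V) (r : nat) (rem : list nat) (acc : snapshot -> snapshot)
    (js : list nat) (dj dts : nat)
| PhRescanEcho (i ts : nat) (v : V) (rs : snapshot) (rem : list nat)
    (acc : snapshot -> snapshot) (js : list nat) (dj dts : nat)
| PhAddDeliver (i ts : nat) (v : V) (Q : list nat) (js : list nat) (dj dts : nat)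
| PhScanDeliver (rem : list nat) (acc : snapshot -> snapshot) (dj dts : nat)
| PhReturn (e : msg) (v : V).

Definition prog_of (p : nat) (ph : phase) : prog :=
  match ph with
  | PhIdle r => PDone r
  | PhBroadcast ts v => broadcast_op n f p ts v
  | PhReadSend j js dj dts => PReadSend j (parse_send p j js (deliver_scan dj dts))
  | PhParseSend j js om dj dts => parse_send p j js (deliver_scan dj dts) om
  | PhAddEcho i ts v js dj dts => process_m n f p (sval i ts v) (refresh_rest p js dj dts)
  | PhScanEcho i ts v rem acc js dj dts =>
      read_all (@PReadEcho V) rem
        (fun s => echo_check p (sval i ts v) (refresh_rest p js dj dts) (acc s))
  | PhAddReady i ts v js dj dts =>
      PAddReady (rdy p (sval i ts v)) (scan_ready (sval i ts v) (refresh_rest p js dj dts))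
  | PhScanReady i ts v r rem acc js dj dts =>
      read_all (@PReadReady V) (r :: rem)
        (fun rs => rescan_echo (sval i ts v) (refresh_rest p js dj dts) (acc rs))
  | PhRescanEcho i ts v rs rem acc js dj dts =>
      read_all (@PReadEcho V) rem
        (fun s2 => quorum_check (sval i ts v) (refresh_rest p js dj dts) rs (acc s2))
  | PhAddDeliver i ts v Q js dj dts =>
      PAddDeliver (MDel (sval i ts v) (map (fun l => rdy l (sval i ts v)) Q))
        (refresh_rest p js dj dts)
  | PhScanDeliver rem acc dj dts =>
      read_all (@PReadDeliver V) rem (fun ds => deliver_check dj dts (acc ds))
  | PhReturn e v => PAddDeliver e (PDone (Some v))
  end.

(* An exhausted list is mapped to the phase that follows, so that [PhReadSend] and
   [PhScanReady] always have a register left to read. *)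
Definition refresh_phase (js : list nat) (dj dts : nat) : phase :=
  match js with
  | [] => PhScanDeliver all_procs (fun s => s) dj dts
  | j :: js' => PhReadSend j js' dj dts
  end.

Lemma prog_of_refresh_phase p js dj dts :
  prog_of p (refresh_phase js dj dts) = refresh_rest p js dj dts.
Proof. destruct js; reflexivity. Qed.

Definition ready_phase (i ts : nat) (v : V) (rem : list nat) (acc : snapshot -> snapshot)
  (js : list nat) (dj dts : nat) : phase :=
  match rem with
  | [] => PhRescanEcho i ts v (acc (fun _ => [])) all_procs (fun s => s) js dj dts
  | r :: rem' => PhScanReady i ts v r rem' acc js dj dts
  end.

Lemma prog_of_ready_phase p i ts v rem acc js dj dts :
  prog_of p (ready_phase i ts v rem acc js dj dts) =
  read_all (@PReadReady V) rem
    (fun rs => rescan_echo (sval i ts v) (refresh_rest p js dj dts) (acc rs)).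
Proof. destruct rem; reflexivity. Qed.

Definition acc_spec (rem : list nat) (acc : snapshot -> snapshot) : Prop :=
  NoDup rem /\ (forall s l, In l rem -> acc s l = s l) /\
  (forall s l, l < n -> ~ In l rem -> acc s l = acc (fun _ => []) l).

Definition reads_within (R : nat -> msg -> Prop) (rem : list nat)
  (acc : snapshot -> snapshot) : Prop :=
  forall l y, l < n -> ~ In l rem -> In y (acc (fun _ => []) l) -> R l y.

Lemma acc_spec_init : acc_spec all_procs (fun s => s).
Proof.
  split; [apply seq_NoDup | split]; [reflexivity |].
  intros s l Hl Hnot. exfalso. apply Hnot, in_all_procs, Hl.
Qed.

Lemma reads_within_init R : reads_within R all_procs (fun s => s).
Proof. intros l y Hl Hnot. exfalso. apply Hnot, in_all_procs, Hl. Qed.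

Lemma acc_spec_next r rem acc e :
  acc_spec (r :: rem) acc -> acc_spec rem (fun s => acc (upd s r e)).
Proof.
  intros (Hnd & Hrem & Hout). inversion Hnd as [|? ? Hr Hnd']; subst.
  split; [exact Hnd' | split].
  - intros s l Hl. rewrite Hrem by (right; exact Hl). apply upd_neq. intros ->. contradiction.
  - intros s l Hl Hnot. destruct (Nat.eq_dec l r) as [-> | Hne].
    + rewrite !Hrem by (left; reflexivity). rewrite !upd_eq. reflexivity.
    + assert (Hnot' : ~ In l (r :: rem)) by (intros [-> | ?]; auto).
      rewrite (Hout _ l Hl Hnot'), (Hout (upd _ r e) l Hl Hnot'). reflexivity.
Qed.

Lemma acc_read {r rem acc} e {l} :
  acc_spec (r :: rem) acc -> l < n -> ~ In l rem ->
  acc (upd (fun _ => []) r e) l = upd (acc (fun _ => [])) r e l.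
Proof.
  intros (_ & Hrem & Hout) Hl Hnot. destruct (Nat.eq_dec l r) as [-> | Hne].
  - rewrite Hrem by (left; reflexivity). rewrite !upd_eq. reflexivity.
  - rewrite upd_neq by exact Hne. apply Hout; [exact Hl|]. intros [-> | ?]; auto.
Qed.

Lemma reads_within_next R r rem acc e :
  acc_spec (r :: rem) acc -> reads_within R (r :: rem) acc -> (forall y, In y e -> R r y) ->
  reads_within R rem (fun s => acc (upd s r e)).
Proof.
  intros Hacc Hold He l y Hl Hnot Hy. rewrite (acc_read e Hacc Hl Hnot) in Hy.
  destruct (Nat.eq_dec l r) as [-> | Hne].
  - rewrite upd_eq in Hy. auto.
  - rewrite upd_neq in Hy by exact Hne. apply (Hold l y Hl); [intros [-> | ?]; auto | exact Hy].
Qed.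

(** * The invariant *)

Definition phase_ok (C : config) (p : nat) (ph : phase) : Prop :=
  match ph with
  | PhScanEcho i ts v rem acc _ _ _ =>
      In (MSig p (sval i ts v)) (m_echo (c_mem C) p) /\ acc_spec rem acc
  | PhAddReady i ts v _ _ _ => In (MSig p (sval i ts v)) (m_echo (c_mem C) p)
  | PhScanReady _ _ _ r rem acc _ _ _ =>
      acc_spec (r :: rem) acc /\
      reads_within (fun l y => correct l -> In y (m_ready (c_mem C) l)) (r :: rem) acc
  | PhRescanEcho _ _ _ rs _ _ _ _ _ =>
      forall l y, correct l -> In y (rs l) -> In y (m_ready (c_mem C) l)
  | PhAddDeliver i ts v Q _ _ _ =>
      forall l, correct l -> In l Q -> In (rdy l (sval i ts v)) (m_ready (c_mem C) l)
  | PhScanDeliver rem acc _ _ =>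
      acc_spec rem acc /\ reads_within (fun _ y => In y (c_seen C)) rem acc
  | PhReturn e _ => In e (c_seen C)
  | _ => True
  end.

Lemma refresh_phase_ok C p js dj dts : phase_ok C p (refresh_phase js dj dts).
Proof. destruct js; simpl; auto using acc_spec_init, reads_within_init. Qed.

Lemma ready_phase_ok C p i ts v rem acc js dj dts :
  acc_spec rem acc ->
  reads_within (fun l y => correct l -> In y (m_ready (c_mem C) l)) rem acc ->
  phase_ok C p (ready_phase i ts v rem acc js dj dts).
Proof.
  destruct rem as [|r rem]; simpl; auto.
  intros _ Hreads l y Hl Hy. exact (Hreads l y (correct_lt Hl) (fun H => H) Hy Hl).
Qed.

Definition no_conflicting_echo (i ts : nat) (v : V) (k : nat) (l : list msg) : Prop :=
  forall w, In (MSig k (sval i ts w)) l -> w = v.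

Definition scanned_clean (ph : phase) (x : msg) (k : nat) : Prop :=
  match ph with
  | PhScanEcho i ts v rem acc _ _ _ =>
      x = sval i ts v /\ ~ In k rem /\ no_conflicting_echo i ts v k (acc (fun _ => []) k)
  | PhAddReady i ts v _ _ _ => x = sval i ts v
  | _ => False
  end.

Lemma refresh_phase_unscanned {js dj dts x k} : ~ scanned_clean (refresh_phase js dj dts) x k.
Proof. destruct js; simpl; auto. Qed.

Lemma ready_phase_unscanned {i ts v rem acc js dj dts x k} :
  ~ scanned_clean (ready_phase i ts v rem acc js dj dts) x k.
Proof. destruct rem; simpl; auto. Qed.

Definition clean_echo_read (C : config) (ph : phase) (x : msg) (k : nat) : Prop :=
  match ph with
  | PhScanEcho i ts v _ _ _ _ _ =>
      x = sval i ts v /\ no_conflicting_echo i ts v k (m_echo (c_mem C) k)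
  | _ => False
  end.

Definition committed (C : config) (G : nat -> phase) (p : nat) (x : msg) (k : nat) : Prop :=
  k < n /\ (In (rdy p x) (m_ready (c_mem C) p) \/ scanned_clean (G p) x k).

(* Each of [p] and [q] wrote its echo before reading the other's echo register, so the
   later of the two reads sees the earlier echo. *)
Definition commit_exclusive (C : config) (G : nat -> phase) : Prop :=
  forall p q i ts (v w : V), correct p -> correct q ->
    committed C G p (sval i ts v) q -> committed C G q (sval i ts w) p -> v = w.

Definition pcs_ok (C : config) (G : nat -> phase) : Prop :=
  forall p, correct p -> c_pc C p = prog_of p (G p) /\ phase_ok C p (G p).

Definition deliver_seen (C : config) : Prop :=
  forall q y, In y (m_deliver (c_mem C) q) -> In y (c_seen C).

Definition ready_sound (C : config) : Prop :=
  forall k y z, correct k -> In z (c_seen C) -> subterm (rdy k y) z ->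
    In (rdy k y) (m_ready (c_mem C) k).

Definition ready_echoed (C : config) : Prop :=
  forall k y, correct k -> In (rdy k y) (m_ready (c_mem C) k) -> In (MSig k y) (m_echo (c_mem C) k).

Record invariant (C : config) (G : nat -> phase) : Prop := {
  inv_pcs : pcs_ok C G;
  inv_deliver_seen : deliver_seen C;
  inv_ready_sound : ready_sound C;
  inv_ready_echoed : ready_echoed C;
  inv_commit_exclusive : commit_exclusive C G }.

Arguments inv_pcs {C G}.
Arguments inv_deliver_seen {C G} _ {q y}.
Arguments inv_ready_sound {C G} _ {k y z}.
Arguments inv_ready_echoed {C G} _ {k y}.
Arguments inv_commit_exclusive {C G} _ {p q i ts v w}.

Definition grows (C C' : config) : Prop :=
  (forall l, correct l -> incl (m_echo (c_mem C) l) (m_echo (c_mem C') l) /\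
                          incl (m_ready (c_mem C) l) (m_ready (c_mem C') l)) /\
  incl (c_seen C) (c_seen C').

Lemma step_grows {C C'} : step n f B C C' -> grows C C'.
Proof.
  intros Hst.
  destruct Hst; split; try (intros l Hl; split); simpl;
    first [ apply incl_upd_cons | apply incl_tl, incl_refl | apply incl_appr, incl_refl
          | rewrite upd_neq by (eapply correct_not_byz; eauto); apply incl_refl
          | apply incl_refl ].
Qed.

Lemma phase_ok_grows {C C' p ph} : grows C C' -> correct p -> phase_ok C p ph -> phase_ok C' p ph.
Proof.
  intros [Hregs Hseen] Hp. destruct ph; simpl; auto.
  - intros [Hecho Hacc]. split; [apply (Hregs p Hp), Hecho | exact Hacc].
  - intros Hecho. apply (Hregs p Hp), Hecho.
  - intros [Hacc Hreads]. split; [exact Hacc|].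
    intros l y Hl Hnot Hy Hc. apply (Hregs l Hc). eapply Hreads; eauto.
  - intros Hrs l y Hl Hy. apply (Hregs l Hl). eauto.
  - intros HQ l Hl Hin. apply (Hregs l Hl). eauto.
  - intros [Hacc Hreads]. split; [exact Hacc|]. intros l y Hl Hnot Hy. apply Hseen. eauto.
Qed.

Lemma invariant_pc {C G p} : invariant C G -> correct p ->
  c_pc C p = prog_of p (G p) /\ phase_ok C p (G p).
Proof. intros HI. apply (inv_pcs HI). Qed.

Lemma committed_echoed {C G p x k} :
  invariant C G -> correct p -> committed C G p x k -> In (MSig p x) (m_echo (c_mem C) p).
Proof.
  intros HI Hp (_ & [Hr | Hc]); [exact (inv_ready_echoed HI Hp Hr)|].
  destruct (invariant_pc HI Hp) as [_ Hok].
  destruct (G p); simpl in Hc, Hok; try contradiction.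
  - destruct Hc as [-> _]. apply Hok.
  - subst x. exact Hok.
Qed.

Lemma commit_exclusive_quiet C G C' G' :
  commit_exclusive C G ->
  (forall q y k, correct q -> committed C' G' q y k -> committed C G q y k) ->
  commit_exclusive C' G'.
Proof.
  intros Hexcl Hold p q i ts v w Hp Hq H1 H2.
  exact (Hexcl p q i ts v w Hp Hq (Hold _ _ _ Hp H1) (Hold _ _ _ Hq H2)).
Qed.

Lemma commit_exclusive_upd C C' G p ph' :
  invariant C G ->
  (forall q, q <> p -> correct q -> m_ready (c_mem C') q = m_ready (c_mem C) q) ->
  (forall y k, committed C' (upd G p ph') p y k ->
     committed C G p y k \/ clean_echo_read C (G p) y k) ->
  commit_exclusive C' (upd G p ph').
Proof.
  intros HI Hready Hnew.
  assert (Hcases : forall q y k, correct q -> committed C' (upd G p ph') q y k ->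
            committed C G q y k \/ (q = p /\ clean_echo_read C (G p) y k)).
  { intros q y k Hq Hc. destruct (Nat.eq_dec q p) as [-> | Hne]; [destruct (Hnew y k Hc); auto|].
    left. unfold committed in *. rewrite upd_neq in Hc by exact Hne. rewrite <- Hready; auto. }
  assert (Hfresh : forall q k i ts v w, committed C G q (sval i ts v) k ->
            clean_echo_read C (G p) (sval i ts w) q -> correct q -> v = w).
  { intros q k i ts v w Hold Hclean Hq. apply (committed_echoed HI Hq) in Hold.
    destruct (G p); try contradiction. destruct Hclean as [E Hno].
    injection E as -> -> ->. exact (Hno _ Hold). }
  intros p1 q1 i ts v w Hp1 Hq1 H1 H2.
  destruct (Hcases _ _ _ Hp1 H1) as [O1 | [-> F1]], (Hcases _ _ _ Hq1 H2) as [O2 | [-> F2]].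
  - exact (inv_commit_exclusive HI Hp1 Hq1 O1 O2).
  - eapply Hfresh; eauto.
  - symmetry. eapply Hfresh; eauto.
  - destruct (G p); try contradiction. destruct F1 as [E1 _], F2 as [E2 _].
    unfold sval in E1, E2. congruence.
Qed.

Lemma invariant_correct_step C C' G p ph' :
  invariant C G -> correct p -> grows C C' ->
  (forall q, q <> p -> c_pc C' q = c_pc C q) -> c_pc C' p = prog_of p ph' ->
  phase_ok C' p ph' -> deliver_seen C' -> ready_sound C' -> ready_echoed C' ->
  commit_exclusive C' (upd G p ph') ->
  invariant C' (upd G p ph').
Proof.
  intros HI Hp Hgrow Hothers Hpc Hok Hdel Hsound Hecho Hexcl. constructor; auto.
  intros q Hq. destruct (Nat.eq_dec q p) as [-> | Hne].
  - rewrite upd_eq. auto.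
  - rewrite upd_neq, Hothers by exact Hne. destruct (invariant_pc HI Hq) as [Hpc_q Hok_q].
    split; [exact Hpc_q | exact (phase_ok_grows Hgrow Hq Hok_q)].
Qed.

Lemma invariant_pc_step C G i prg bc ph' :
  invariant C G -> correct i -> prg = prog_of i ph' -> phase_ok C i ph' ->
  (forall y k, k < n -> scanned_clean ph' y k ->
     scanned_clean (G i) y k \/ clean_echo_read C (G i) y k) ->
  invariant (Cfg (c_mem C) (upd (c_pc C) i prg) bc (c_seen C)) (upd G i ph').
Proof.
  intros HI Hi -> Hok Hscan.
  apply invariant_correct_step with (C := C); try exact HI; try exact Hi; try exact Hok.
  - split; [intros; split|]; apply incl_refl.
  - intros q Hq. apply upd_neq, Hq.
  - apply upd_eq.
  - exact (@inv_deliver_seen _ _ HI).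
  - exact (@inv_ready_sound _ _ HI).
  - exact (@inv_ready_echoed _ _ HI).
  - apply commit_exclusive_upd with (C := C); [exact HI | intros; reflexivity |].
    intros y k (Hk & Hc). unfold committed. rewrite upd_eq in Hc.
    destruct Hc as [Hr | Hc]; [auto|]. destruct (Hscan y k Hk Hc); auto.
Qed.

(** * Preservation by the steps of the model *)

Lemma commit_exclusive_unscanned C C' G p ph' :
  invariant C G -> (forall q, m_ready (c_mem C') q = m_ready (c_mem C) q) ->
  (forall y k, k < n -> ~ scanned_clean ph' y k) ->
  commit_exclusive C' (upd G p ph').
Proof.
  intros HI Hready Hunscanned. apply commit_exclusive_upd with (C := C); [exact HI | auto |].
  intros y k (Hk & Hc). unfold committed. rewrite upd_eq, Hready in Hc.
  destruct Hc as [Hr | Hc]; [auto | exfalso; exact (Hunscanned y k Hk Hc)].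
Qed.

Lemma deliver_seen_add C x i pc bc :
  deliver_seen C ->
  deliver_seen (Cfg (set_deliver (c_mem C) i (x :: m_deliver (c_mem C) i)) pc bc (x :: c_seen C)).
Proof.
  intros Hdel q y Hy. simpl in Hy |- *. destruct (Nat.eq_dec q i) as [-> | Hne].
  - rewrite upd_eq in Hy.
    destruct Hy as [-> | Hy]; [left; reflexivity | right; exact (Hdel _ _ Hy)].
  - rewrite upd_neq in Hy by exact Hne. right. exact (Hdel _ _ Hy).
Qed.

Ltac inspect_phase HI Hi Hpc :=
  let Epc := fresh "Epc" in
  destruct (invariant_pc HI Hi) as [Epc Hok]; rewrite Epc in Hpc; clear Epc;
  match type of Hpc with
  | prog_of _ (?G ?i) = _ =>
      destruct (G i) as [res|ts0 v0|j0 js dj dts|j0 js om dj dts|i0 ts0 v0 js dj dts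
                        |i0 ts0 v0 [|r0 rem] acc js dj dts|i0 ts0 v0 js dj dts
                        |i0 ts0 v0 r0 rem acc js dj dts|i0 ts0 v0 rs [|r0 rem] acc js dj dts
                        |i0 ts0 v0 Q js dj dts|[|r0 rem] acc dj dts|e0 v0] eqn:EG
  end;
  try discriminate Hpc.

Lemma read_send_preserves {C G i j k} :
  invariant C G -> correct i -> c_pc C i = PReadSend j k ->
  exists G', invariant (Cfg (c_mem C) (upd (c_pc C) i (k (m_send (c_mem C) j)))
                          (c_bc C) (c_seen C)) G'.
Proof.
  intros HI Hi Hpc. inspect_phase HI Hi Hpc. injection Hpc as <- <-.
  exists (upd G i (PhParseSend j0 js (m_send (c_mem C) j0) dj dts)).
  apply invariant_pc_step; [exact HI | exact Hi | reflexivity | exact I | intros y l _ []].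
Qed.

Lemma read_echo_preserves {C G i r k} :
  invariant C G -> correct i -> c_pc C i = PReadEcho r k ->
  exists G', invariant (Cfg (c_mem C) (upd (c_pc C) i (k (m_echo (c_mem C) r)))
                          (c_bc C) (c_seen C)) G'.
Proof.
  intros HI Hi Hpc. inspect_phase HI Hi Hpc; injection Hpc as <- <-.
  - set (e := m_echo (c_mem C) r0). destruct Hok as [Hecho Hacc].
    exists (upd G i (PhScanEcho i0 ts0 v0 rem (fun s => acc (upd s r0 e)) js dj dts)).
    apply invariant_pc_step;
      [exact HI | exact Hi | reflexivity | split; auto using acc_spec_next |].
    intros y l Hl (-> & Hnot & Hno). rewrite EG.
    rewrite (acc_read e Hacc Hl Hnot) in Hno. destruct (Nat.eq_dec l r0) as [-> | Hne].
    + right. rewrite upd_eq in Hno. split; [reflexivity | exact Hno].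
    + left. rewrite upd_neq in Hno by exact Hne.
      split; [reflexivity | split; [intros [-> | ?]; auto | exact Hno]].
  - exists (upd G i (PhRescanEcho i0 ts0 v0 rs rem
                       (fun s => acc (upd s r0 (m_echo (c_mem C) r0))) js dj dts)).
    apply invariant_pc_step; [exact HI | exact Hi | reflexivity | exact Hok | intros y l _ []].
Qed.

Lemma read_ready_preserves {C G i r k} :
  invariant C G -> correct i -> c_pc C i = PReadReady r k ->
  exists G', invariant (Cfg (c_mem C) (upd (c_pc C) i (k (m_ready (c_mem C) r)))
                          (c_bc C) (c_seen C)) G'.
Proof.
  intros HI Hi Hpc. inspect_phase HI Hi Hpc. injection Hpc as <- <-.
  destruct Hok as [Hacc Hreads].
  exists (upd G i (ready_phase i0 ts0 v0 rem
                     (fun s => acc (upd s r0 (m_ready (c_mem C) r0))) js dj dts)).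
  apply invariant_pc_step; [exact HI | exact Hi | rewrite prog_of_ready_phase; reflexivity | |].
  - apply ready_phase_ok; [apply acc_spec_next, Hacc |].
    apply reads_within_next; auto.
  - intros y l _ Hc. exfalso. exact (ready_phase_unscanned Hc).
Qed.

Lemma read_deliver_preserves {C G i r k} :
  invariant C G -> correct i -> c_pc C i = PReadDeliver r k ->
  exists G', invariant (Cfg (c_mem C) (upd (c_pc C) i (k (m_deliver (c_mem C) r)))
                          (c_bc C) (c_seen C)) G'.
Proof.
  intros HI Hi Hpc. inspect_phase HI Hi Hpc. injection Hpc as <- <-.
  destruct Hok as [Hacc Hreads].
  exists (upd G i (PhScanDeliver rem (fun s => acc (upd s r0 (m_deliver (c_mem C) r0))) dj dts)).
  apply invariant_pc_step; [exact HI | exact Hi | reflexivity | split | intros y l _ []].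
  - apply acc_spec_next, Hacc.
  - apply reads_within_next; auto. intros y Hy. exact (inv_deliver_seen HI Hy).
Qed.

Lemma write_send_preserves {C G i x k} :
  invariant C G -> correct i -> c_pc C i = PWriteSend x k ->
  exists G', invariant (Cfg (set_send (c_mem C) i (Some x)) (upd (c_pc C) i k)
                          (c_bc C) (x :: c_seen C)) G'.
Proof.
  intros HI Hi Hpc. inspect_phase HI Hi Hpc. injection Hpc as <- <-.
  exists (upd G i (refresh_phase all_procs i ts0)).
  apply invariant_correct_step with (C := C); try exact HI; try exact Hi.
  - split; [intros; split; apply incl_refl | apply incl_tl, incl_refl].
  - intros q Hq. apply upd_neq, Hq.
  - simpl. rewrite upd_eq, prog_of_refresh_phase. reflexivity.
  - apply refresh_phase_ok.
  - intros q y Hy. right. exact (inv_deliver_seen HI Hy).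
  - intros l y z Hl [<- | Hz] Hsub.
    + exfalso. exact (rdy_not_subterm_sval Hsub).
    + exact (inv_ready_sound HI Hl Hz Hsub).
  - exact (@inv_ready_echoed _ _ HI).
  - apply commit_exclusive_unscanned with (C := C); [exact HI | reflexivity |].
    intros y l _ Hc. exact (refresh_phase_unscanned Hc).
Qed.

Lemma add_echo_preserves {C G i x k} :
  invariant C G -> correct i -> c_pc C i = PAddEcho x k ->
  exists G', invariant (Cfg (set_echo (c_mem C) i (x :: m_echo (c_mem C) i)) (upd (c_pc C) i k)
                          (c_bc C) (x :: c_seen C)) G'.
Proof.
  intros HI Hi Hpc. inspect_phase HI Hi Hpc. injection Hpc as <- <-.
  exists (upd G i (PhScanEcho i0 ts0 v0 all_procs (fun s => s) js dj dts)).
  apply invariant_correct_step with (C := C); try exact HI; try exact Hi.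
  - split; [intros; split; [apply incl_upd_cons | apply incl_refl] | apply incl_tl, incl_refl].
  - intros q Hq. apply upd_neq, Hq.
  - apply upd_eq.
  - split; [simpl; rewrite upd_eq; left; reflexivity | apply acc_spec_init].
  - intros q y Hy. right. exact (inv_deliver_seen HI Hy).
  - intros l y z Hl [<- | Hz] Hsub.
    + exfalso. exact (rdy_not_subterm_echo Hsub).
    + exact (inv_ready_sound HI Hl Hz Hsub).
  - intros l y Hl Hr. apply incl_upd_cons. exact (inv_ready_echoed HI Hl Hr).
  - apply commit_exclusive_unscanned with (C := C); [exact HI | reflexivity |].
    intros y l Hl (_ & Hnot & _). exact (Hnot (in_all_procs _ Hl)).
Qed.

Lemma add_ready_preserves {C G i x k} :
  invariant C G -> correct i -> c_pc C i = PAddReady x k ->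
  exists G', invariant (Cfg (set_ready (c_mem C) i (x :: m_ready (c_mem C) i)) (upd (c_pc C) i k)
                          (c_bc C) (x :: c_seen C)) G'.
Proof.
  intros HI Hi Hpc. inspect_phase HI Hi Hpc. injection Hpc as <- <-.
  set (x := sval i0 ts0 v0).
  assert (Hready : forall l y,
            In y (upd (m_ready (c_mem C)) i (rdy i x :: m_ready (c_mem C) i) l) ->
            (l = i /\ y = rdy i x) \/ In y (m_ready (c_mem C) l)).
  { intros l y Hy. destruct (Nat.eq_dec l i) as [-> | Hne].
    - rewrite upd_eq in Hy. destruct Hy as [<- | Hy]; auto.
    - rewrite upd_neq in Hy by exact Hne. auto. }
  exists (upd G i (ready_phase i0 ts0 v0 all_procs (fun s => s) js dj dts)).
  apply invariant_correct_step with (C := C); try exact HI; try exact Hi.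
  - split; [intros; split; [apply incl_refl | apply incl_upd_cons] | apply incl_tl, incl_refl].
  - intros q Hq. apply upd_neq, Hq.
  - simpl. rewrite upd_eq, prog_of_ready_phase. reflexivity.
  - apply ready_phase_ok; [apply acc_spec_init | apply reads_within_init].
  - intros q y Hy. right. exact (inv_deliver_seen HI Hy).
  - intros l y z Hl [<- | Hz] Hsub; simpl.
    + apply rdy_subterm_rdy in Hsub as [-> ->]. rewrite upd_eq. left. reflexivity.
    + apply incl_upd_cons. exact (inv_ready_sound HI Hl Hz Hsub).
  - intros l y Hl Hr. apply Hready in Hr as [[-> E] | Hr].
    + injection E as ->. exact Hok.
    + exact (inv_ready_echoed HI Hl Hr).
  - apply commit_exclusive_upd with (C := C); [exact HI | intros q Hq _; apply upd_neq, Hq |].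
    intros y l (Hl & [Hr | Hc]).
    + apply Hready in Hr as [[_ E] | Hr]; left; split; auto.
      injection E as ->. right. rewrite EG. reflexivity.
    + rewrite upd_eq in Hc. exfalso. exact (ready_phase_unscanned Hc).
Qed.

Lemma add_deliver_preserves {C G i x k} :
  invariant C G -> correct i -> c_pc C i = PAddDeliver x k ->
  exists G', invariant (Cfg (set_deliver (c_mem C) i (x :: m_deliver (c_mem C) i))
                          (upd (c_pc C) i k) (c_bc C) (x :: c_seen C)) G'.
Proof.
  intros HI Hi Hpc.
  assert (Hregs : grows C (Cfg (set_deliver (c_mem C) i (x :: m_deliver (c_mem C) i))
                              (upd (c_pc C) i k) (c_bc C) (x :: c_seen C)))
    by (split; [intros; split; apply incl_refl | apply incl_tl, incl_refl]).
  inspect_phase HI Hi Hpc; injection Hpc as <- <-.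
  - exists (upd G i (refresh_phase js dj dts)).
    apply invariant_correct_step with (C := C); try exact HI; try exact Hi; try exact Hregs.
    + intros q Hq. apply upd_neq, Hq.
    + simpl. rewrite upd_eq, prog_of_refresh_phase. reflexivity.
    + apply refresh_phase_ok.
    + apply deliver_seen_add, (@inv_deliver_seen _ _ HI).
    + intros l y z Hl [<- | Hz] Hsub.
      * apply rdy_subterm_cert_entry in Hsub as [HQ ->]. exact (Hok l Hl HQ).
      * exact (inv_ready_sound HI Hl Hz Hsub).
    + exact (@inv_ready_echoed _ _ HI).
    + apply commit_exclusive_unscanned with (C := C); [exact HI | reflexivity |].
      intros y l _ Hc. exact (refresh_phase_unscanned Hc).
  - exists (upd G i (PhIdle (Some v0))).
    apply invariant_correct_step with (C := C); try exact HI; try exact Hi; try exact Hregs.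
    + intros q Hq. apply upd_neq, Hq.
    + apply upd_eq.
    + exact I.
    + apply deliver_seen_add, (@inv_deliver_seen _ _ HI).
    + intros l y z Hl [<- | Hz] Hsub;
        [exact (inv_ready_sound HI Hl Hok Hsub) | exact (inv_ready_sound HI Hl Hz Hsub)].
    + exact (@inv_ready_echoed _ _ HI).
    + apply commit_exclusive_unscanned with (C := C); [exact HI | reflexivity | intros y l _ []].
Qed.

Lemma parse_send_choice_preserves C G i j js om dj dts (A : Type) (P : A -> Prop) k (a : A) :
  invariant C G -> correct i -> PChoose P k = parse_send i j js (deliver_scan dj dts) om -> P a ->
  exists G', invariant (Cfg (c_mem C) (upd (c_pc C) i (k a)) (c_bc C) (c_seen C)) G'.
Proof.
  intros HI Hi Hpc Ha. destruct (PChoose_inj Hpc Ha) as ([[ts v] |] & _ & <-).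
  - exists (upd G i (PhAddEcho j ts v js dj dts)).
    apply invariant_pc_step; [exact HI | exact Hi | reflexivity | exact I | intros y l _ []].
  - exists (upd G i (refresh_phase js dj dts)).
    apply invariant_pc_step; auto using refresh_phase_ok.
    + rewrite prog_of_refresh_phase. reflexivity.
    + intros y l _ Hc. exfalso. exact (refresh_phase_unscanned Hc).
Qed.

Lemma echo_choice_preserves C G i i0 ts v acc js dj dts (A : Type) (P : A -> Prop) k (a : A) :
  invariant C G -> correct i -> G i = PhScanEcho i0 ts v [] acc js dj dts ->
  PChoose P k = echo_check i (sval i0 ts v) (refresh_rest i js dj dts) (acc (fun _ => [])) -> P a ->
  exists G', invariant (Cfg (c_mem C) (upd (c_pc C) i (k a)) (c_bc C) (c_seen C)) G'.
Proof.
  intros HI Hi EG Hpc Ha. destruct (invariant_pc HI Hi) as [_ Hok]. rewrite EG in Hok.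
  destruct (PChoose_inj Hpc Ha) as ([|] & Hclean & <-).
  - exists (upd G i (ready_phase i0 ts v all_procs (fun s => s) js dj dts)).
    apply invariant_pc_step; [exact HI | exact Hi | rewrite prog_of_ready_phase; reflexivity | |].
    + apply ready_phase_ok; [apply acc_spec_init | apply reads_within_init].
    + intros y l _ Hc. exfalso. exact (ready_phase_unscanned Hc).
  - exists (upd G i (PhAddReady i0 ts v js dj dts)).
    apply invariant_pc_step; [exact HI | exact Hi | reflexivity | apply Hok |].
    intros y l Hl Hy. left. rewrite EG. simpl in Hy |- *. subst y.
    split; [reflexivity | split; [intros [] |]].
    intros w Hw. apply NNPP. intros Hne. apply Hclean. exists i0, ts, v, w, l. auto.
Qed.

Lemma quorum_choice_preserves C G i i0 ts v rs acc js dj dts (A : Type) (P : A -> Prop) k (a : A) :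
  invariant C G -> correct i -> G i = PhRescanEcho i0 ts v rs [] acc js dj dts ->
  PChoose P k = quorum_check (sval i0 ts v) (refresh_rest i js dj dts) rs (acc (fun _ => [])) ->
  P a ->
  exists G', invariant (Cfg (c_mem C) (upd (c_pc C) i (k a)) (c_bc C) (c_seen C)) G'.
Proof.
  intros HI Hi EG Hpc Ha. destruct (invariant_pc HI Hi) as [_ Hok]. rewrite EG in Hok.
  destruct (PChoose_inj Hpc Ha) as ([Q |] & Hquorum & <-).
  - exists (upd G i (PhAddDeliver i0 ts v Q js dj dts)).
    apply invariant_pc_step; [exact HI | exact Hi | reflexivity | | intros y l _ []].
    intros l Hl HQ. destruct Hquorum as ((_ & _ & Hq) & _). apply (Hok l); [exact Hl|].
    apply Hq, HQ.
  - exists (upd G i (refresh_phase js dj dts)).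
    apply invariant_pc_step; auto using refresh_phase_ok.
    + rewrite prog_of_refresh_phase. reflexivity.
    + intros y l _ Hc. exfalso. exact (refresh_phase_unscanned Hc).
Qed.

Lemma deliver_choice_preserves C G i acc dj dts (A : Type) (P : A -> Prop) k (a : A) :
  invariant C G -> correct i -> G i = PhScanDeliver [] acc dj dts ->
  PChoose P k = deliver_check dj dts (acc (fun _ => [])) -> P a ->
  exists G', invariant (Cfg (c_mem C) (upd (c_pc C) i (k a)) (c_bc C) (c_seen C)) G'.
Proof.
  intros HI Hi EG Hpc Ha. destruct (invariant_pc HI Hi) as [_ Hok]. rewrite EG in Hok.
  destruct Hok as [_ Hreads].
  destruct (PChoose_inj Hpc Ha) as ([[e v] |] & Hfound & <-).
  - exists (upd G i (PhReturn e v)).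
    apply invariant_pc_step; [exact HI | exact Hi | reflexivity | | intros y l _ []].
    destruct Hfound as (l & sigma & Hl & _ & He & _). exact (Hreads l e Hl (fun H => H) He).
  - exists (upd G i (PhIdle None)).
    apply invariant_pc_step; [exact HI | exact Hi | reflexivity | exact I | intros y l _ []].
Qed.

Lemma choose_preserves {C G i} {A : Type} {P : A -> Prop} {k} {a : A} :
  invariant C G -> correct i -> c_pc C i = PChoose P k -> P a ->
  exists G', invariant (Cfg (c_mem C) (upd (c_pc C) i (k a)) (c_bc C) (c_seen C)) G'.
Proof.
  intros HI Hi Hpc Ha. inspect_phase HI Hi Hpc; symmetry in Hpc.
  - eapply parse_send_choice_preserves; eassumption.
  - eapply echo_choice_preserves; eassumption.
  - eapply quorum_choice_preserves; eassumption.
  - eapply deliver_choice_preserves; eassumption.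
Qed.

Lemma call_deliver_preserves C G i j ts bc :
  invariant C G -> correct i ->
  exists G', invariant (Cfg (c_mem C) (upd (c_pc C) i (deliver_op V n f i j ts)) bc (c_seen C)) G'.
Proof.
  intros HI Hi. exists (upd G i (refresh_phase all_procs j ts)).
  apply invariant_pc_step; auto using refresh_phase_ok.
  - rewrite prog_of_refresh_phase. reflexivity.
  - intros y l _ Hc. exfalso. exact (refresh_phase_unscanned Hc).
Qed.

(* Unforgeability is what keeps Byzantine writes from breaking [ready_sound]: a ready
   signature of a correct process can only be copied from something already seen. *)
Lemma byzantine_write_preserves C G M' s :
  invariant C G -> grows C (Cfg M' (c_pc C) (c_bc C) (s ++ c_seen C)) ->
  (forall x, In x s -> unforgeable B (c_seen C) x) ->
  (forall q, correct q -> m_echo M' q = m_echo (c_mem C) q /\ m_ready M' q = m_ready (c_mem C) q) ->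
  (forall q y, In y (m_deliver M' q) -> In y s \/ In y (m_deliver (c_mem C) q)) ->
  invariant (Cfg M' (c_pc C) (c_bc C) (s ++ c_seen C)) G.
Proof.
  intros HI Hgrow Hunf Hregs Hdel. constructor.
  - intros p Hp. destruct (invariant_pc HI Hp) as [Hpc Hok].
    split; [exact Hpc | exact (phase_ok_grows Hgrow Hp Hok)].
  - intros q y Hy. simpl in *. apply in_or_app.
    destruct (Hdel q y Hy) as [Hs | Hold];
      [left; exact Hs | right; exact (inv_deliver_seen HI Hold)].
  - intros k y z Hk Hz Hsub. simpl in *. rewrite (proj2 (Hregs k Hk)).
    apply in_app_or in Hz as [Hz | Hz]; [|exact (inv_ready_sound HI Hk Hz Hsub)].
    destruct (Hunf z Hz k (MReady y) Hsub) as [HB | (z' & Hz' & Hsub')].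
    + exfalso. exact (correct_not_byz Hk HB eq_refl).
    + exact (inv_ready_sound HI Hk Hz' Hsub').
  - intros k y Hk Hr. simpl in *. destruct (Hregs k Hk) as [-> Hready]. rewrite Hready in Hr.
    exact (inv_ready_echoed HI Hk Hr).
  - apply commit_exclusive_quiet with (C := C) (G := G); [exact (@inv_commit_exclusive _ _ HI) |].
    intros q y k Hq (Hk & Hc). split; [exact Hk|]. simpl in Hc. rewrite (proj2 (Hregs q Hq)) in Hc.
    exact Hc.
Qed.

Lemma step_preserves {C C' G} : invariant C G -> step n f B C C' -> exists G', invariant C' G'.
Proof.
  intros HI Hst. pose proof (step_grows Hst) as Hgrow.
  destruct Hst as [C i j k Hi Hpc|C i j k Hi Hpc|C i j k Hi Hpc|C i j k Hi Hpc
    |C i x k Hi Hpc|C i x k Hi Hpc|C i x k Hi Hpc|C i x k Hi Hpc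
    |C i A P k a Hi Hpc Ha|C i r ts val Hi _ _|C i r j ts Hi _ _ _|C i ts Hi _ _|C i ts v _ _ _
    |C p o Hp Hunf|C p s Hp Hunf|C p s Hp Hunf|C p s Hp Hunf].
  - exact (read_send_preserves HI Hi Hpc).
  - exact (read_echo_preserves HI Hi Hpc).
  - exact (read_ready_preserves HI Hi Hpc).
  - exact (read_deliver_preserves HI Hi Hpc).
  - exact (write_send_preserves HI Hi Hpc).
  - exact (add_echo_preserves HI Hi Hpc).
  - exact (add_ready_preserves HI Hi Hpc).
  - exact (add_deliver_preserves HI Hi Hpc).
  - exact (choose_preserves HI Hi Hpc Ha).
  - exists (upd G i (PhBroadcast ts val)).
    apply invariant_pc_step; [exact HI | exact Hi | reflexivity | exact I | intros y l _ []].
  - eapply call_deliver_preserves; eassumption.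
  - eapply call_deliver_preserves; eassumption.
  - exists G. destruct HI. constructor; assumption.
  - exists G. apply byzantine_write_preserves; try assumption.
    + destruct o as [x|]; simpl; [intros y [-> | []]; exact (Hunf y eq_refl) | intros _ []].
    + intros q _. split; reflexivity.
    + intros q y Hy. right. exact Hy.
  - exists G. apply byzantine_write_preserves; try assumption.
    + intros q Hq. simpl. rewrite upd_neq by exact (correct_not_byz Hq Hp). split; reflexivity.
    + intros q y Hy. right. exact Hy.
  - exists G. apply byzantine_write_preserves; try assumption.
    + intros q Hq. simpl. rewrite upd_neq by exact (correct_not_byz Hq Hp). split; reflexivity.
    + intros q y Hy. right. exact Hy.
  - exists G. apply byzantine_write_preserves; try assumption.
    + intros q _. split; reflexivity.
    + intros q y Hy. simpl in Hy. destruct (Nat.eq_dec q p) as [-> | Hne].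
      * rewrite upd_eq in Hy. left. exact Hy.
      * rewrite upd_neq in Hy by exact Hne. right. exact Hy.
Qed.

Lemma reachable_invariant C : reachable n f B C -> exists G, invariant C G.
Proof.
  intros Hr. induction Hr as [|C C' _ [G HI] Hst].
  - exists (fun _ => PhIdle None). constructor.
    + intros p _. split; [reflexivity | exact I].
    + intros q y [].
    + intros k y z _ [].
    + intros k y _ [].
    + intros p q i ts v w _ _ (_ & [[] | []]).
  - exact (step_preserves HI Hst).
Qed.

Lemma ready_agree C G i j j' ts (v w : V) :
  invariant C G -> correct j -> correct j' ->
  In (rdy j (sval i ts v)) (m_ready (c_mem C) j) ->
  In (rdy j' (sval i ts w)) (m_ready (c_mem C) j') -> v = w.
Proof.
  intros HI Hj Hj' Hr Hr'.
  apply (inv_commit_exclusive HI (i := i) (ts := ts) Hj Hj'); split; auto using correct_lt.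
Qed.

Lemma certified_has_correct_ready C G x sigma j :
  length B <= f -> invariant C G ->
  In (MDel x sigma) (m_deliver (c_mem C) j) -> cert n f x sigma ->
  exists k, correct k /\ In (rdy k x) (m_ready (c_mem C) k).
Proof.
  intros HB HI Hdel (Hlen & ls & Hnd & Hlt & ->). rewrite length_map in Hlen.
  destruct (nodup_longer_not_incl ls B Hnd ltac:(lia)) as (k & Hk & HkB).
  assert (Hc : correct k) by (split; [exact (Hlt k Hk) | exact HkB]).
  exists k. split; [exact Hc|].
  apply (inv_ready_sound HI (z := MDel x (map (fun l => rdy l x) ls)) Hc).
  - exact (inv_deliver_seen HI Hdel).
  - apply st_del2 with (z := rdy k x); [exact (in_map (fun l => rdy l x) ls k Hk) | apply st_refl].
Qed.

End Invariant.

Arguments reachable_invariant {V n f B C}.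
Arguments certified_has_correct_ready {V n f B C G x sigma j}.
Arguments ready_agree {V n f B C G i j j' ts v w}.

Theorem lemma6p3 (V : Type) (n f : nat) (B : list nat) (C : config V) :
  NoDup B -> length B <= f ->
  reachable n f B C ->
  let M := c_mem C in
  (* (I1) *)
  (forall i j ts (v : V) sigma,
      i < n -> j < n ->
      In (MDel (sval i ts v) sigma) (m_deliver M j) ->
      cert n f (sval i ts v) sigma ->
      exists k, correct n B k /\ In (rdy k (sval i ts v)) (m_ready M k)) /\
  (* (I2) *)
  (forall i j ts (v : V),
      correct n B j ->
      In (rdy j (sval i ts v)) (m_ready M j) ->
      In (MSig j (sval i ts v)) (m_echo M j)) /\
  (* (I3) *)
  (forall i j j' ts (v w : V),
      correct n B j -> correct n B j' ->
      In (rdy j (sval i ts v)) (m_ready M j) ->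
      In (rdy j' (sval i ts w)) (m_ready M j') ->
      v = w) /\
  (* (I4) *)
  (forall i j j' ts (v w : V) sigma sigma',
      correct n B j -> correct n B j' ->
      In (MDel (sval i ts v) sigma) (m_deliver M j) -> cert n f (sval i ts v) sigma ->
      In (MDel (sval i ts w) sigma') (m_deliver M j') -> cert n f (sval i ts w) sigma' ->
      v = w).
Proof.
  intros _ HB Hr. destruct (reachable_invariant Hr) as [G HI]. simpl.
  split; [|split; [|split]].
  - intros i j ts v sigma _ _. exact (certified_has_correct_ready HB HI).
  - intros i j ts v. eapply inv_ready_echoed, HI.
  - intros i j j' ts v w. exact (ready_agree HI).
  - intros i j j' ts v w sigma sigma' _ _ Hd Hc Hd' Hc'.
    destruct (certified_has_correct_ready HB HI Hd Hc) as (k & Hk & Hr1).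
    destruct (certified_has_correct_ready HB HI Hd' Hc') as (k' & Hk' & Hr2).
    exact (ready_agree HI Hk Hk' Hr1 Hr2).
Qed.
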